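(* Let $P$ be a finite poset, $\mathbb K$ a field, $R=\mathbb K[\mathcal C(P)]$ and $\omega$ the canonical ideal of $R$. Then for every positive integer $n$, $$\omega^{(n)}=\omega^{n}=\bigoplus_{\xi\in S^{(n)}}\mathbb K\,T^\xi\qquad\text{and}\qquad \omega^{(-n)}=(\omega^{(-1)})^n=\bigoplus_{\xi\in S^{(-n)}}\mathbb K\,T^\xi .$$
   Context: $P^-=P\cup\{-\infty\}$ with $-\infty<z$ for all $z\in P$. For a function $\xi$ and a finite set $B$ in its domain, $\xi^+(B)=\sum_{b\in B}\xi(b)$. The chain polytope is $\mathcal C(P)=\{f\in\mathbb R^P: f(x)\ge 0\ \forall x,\ f^+(C)\le 1$ for every chain $C$ of $P\}$. Let $T_x$ ($x\in P^-$) be indeterminates; for $f\in\mathbb Z^{P^-}$ put $T^f=\prod_{x\in P^-}T_x^{f(x)}$, graded by $\deg T^f=f(-\infty)$. For $n\in\mathbb Z$ let $S^{(n)}=\{\xi\in\mathbb Z^{P^-}: \xi(x)\ge n$ for all $x\in P$, and $\xi(-\infty)\ge \xi^+(C)+n$ for every maximal chain $C$ of $P\}$. The Ehrhart ring is $\mathbb K[\mathcal C(P)]=\bigoplus_{\xi\in S^{(0)}}\mathbb K T^\xi$ (the subring of $\mathbb K[T_x^{\pm1}:x\in P][T_{-\infty}]$ generated by $T^f$ with $f(-\infty)>0$, $f|_P/f(-\infty)\in\mathcal C(P)$), and its canonical ideal is $\omega=\bigoplus_{\xi\in S^{(1)}}\mathbb K T^\xi$ (monomials with $f|_P/f(-\infty)$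 in the relative interior of $\mathcal C(P)$). For $n\in\mathbb Z$, $\omega^{(n)}$ denotes the $n$-th power of $\omega$ in the group of divisorial fractional ideals of $R$, with product $I\cdot J=R:_{Q(R)}(R:_{Q(R)}IJ)$; for $n>0$ it is the $n$-th symbolic power, and $\omega^{(-1)}=R:_{Q(R)}\omega$ is the anticanonical ideal. *)

From HB Require Import structures.
From mathcomp Require Import all_boot all_order all_algebra.
Set Implicit Arguments. Unset Strict Implicit. Unset Printing Implicit Defensive.
Import Order.TTheory GRing.Theory Num.Theory.
Local Open Scope ring_scope.

Section Defs.
Context {disp : Order.disp_t} (P : finPOrderType disp) (K : fieldType).

(* P^- = option P, with None playing the role of -infinity. *)
Definition expo := {ffun option P -> int}.
Definition expo_add (e f : expo) : expo := [ffun x => e x + f x].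
Definition expo0 : expo := [ffun _ => 0].

Definition is_chain (C : {set P}) : bool :=
  [forall x in C, forall y in C, (x >=< y)%O].
Definition is_max_chain (C : {set P}) : bool :=
  is_chain C && [forall D : {set P}, (is_chain D && (C \subset D)) ==> (D == C)].

Definition S (n : int) : pred expo := fun xi =>
  [forall x : P, n <= xi (Some x)] &&
  [forall C : {set P}, is_max_chain C ==>
       (\sum_(x in C) xi (Some x) + n <= xi None)].

(* Laurent polynomials K[T_x^{+-1} : x in P^-], as finite formal sums
   of terms c T^e; two representations denote the same element iff
   their coefficient functions agree. *)
Definition laurent := seq (expo * K).
Definition coef (s : laurent) (e : expo) : K := \sum_(p <- s | p.1 == e) p.2.
Definition lpeq (s t : laurent) := forall e, coef s e = coef t e.
Definition lpzero (s : laurent) := forall e, coef s e = 0.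
Definition lpadd (s t : laurent) : laurent := s ++ t.
Definition lpmul (s t : laurent) : laurent :=
  [seq (expo_add p.1 q.1, p.2 * q.2) | p <- s, q <- t].
Definition lpone : laurent := [:: (expo0, 1)].
Definition supported_in (A : pred expo) (s : laurent) :=
  forall e, coef s e != 0 -> A e.
(* membership in R = K[C(P)] = span of T^xi, xi in S^(0) *)
Definition inRpoly (s : laurent) := supported_in (S 0) s.

(* Q(R): fractions a/b with a, b in R, b <> 0 *)
Definition frac := (laurent * laurent)%type.
Definition fvalid (q : frac) := inRpoly q.1 /\ inRpoly q.2 /\ ~ lpzero q.2.
Definition fequiv (q r : frac) := lpeq (lpmul q.1 r.2) (lpmul r.1 q.2).
Definition fmul (q r : frac) : frac := (lpmul q.1 r.1, lpmul q.2 r.2).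
Definition fadd (q r : frac) : frac :=
  (lpadd (lpmul q.1 r.2) (lpmul r.1 q.2), lpmul q.2 r.2).
Definition fzero : frac := ([::], lpone).
Definition frac_inR (q : frac) := exists r, inRpoly r /\ lpeq q.1 (lpmul r q.2).

Definition fracideal := frac -> Prop.
Definition fieq (I J : fracideal) := forall q, I q <-> J q.

Definition monspan (A : pred expo) : fracideal := fun q =>
  fvalid q /\ exists c, supported_in A c /\ lpeq q.1 (lpmul c q.2).

Definition Rideal : fracideal := monspan (S 0).
Definition omega : fracideal := monspan (S 1).

Definition colon (I : fracideal) : fracideal := fun q =>
  fvalid q /\ forall i, I i -> frac_inR (fmul q i).

Definition prodI (I J : fracideal) : fracideal := fun q =>
  fvalid q /\ exists s : seq (frac * frac),
    (forall p, p \in s -> I p.1 /\ J p.2) /\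
    fequiv q (foldr fadd fzero [seq fmul p.1 p.2 | p <- s]).

(* product in the group of divisorial fractional ideals *)
Definition dprod (I J : fracideal) : fracideal := colon (colon (prodI I J)).

Fixpoint gpow (I : fracideal) (n : nat) : fracideal :=
  match n with 0 => Rideal | k.+1 => dprod I (gpow I k) end.
Fixpoint opow (I : fracideal) (n : nat) : fracideal :=
  match n with 0 => Rideal | k.+1 => prodI I (opow I k) end.

End Defs.

From Pilot Require Import Defs.
From HB Require Import structures.
From mathcomp Require Import all_boot all_order all_algebra.
From mathcomp Require Import zify.
From Stdlib Require Import Setoid Classical.
Import Order.TTheory GRing.Theory Num.Theory.
Set Implicit Arguments. Unset Strict Implicit. Unset Printing Implicit Defensive.
Local Open Scope ring_scope.

(* All fractional ideals involved are monomial, spanned by the [T^xi] with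
   [xi] in some [S^(k)], so everything reduces to the combinatorics of these
   exponent sets, computations in [Q(R)] taking place in the Laurent
   polynomial ring, a domain.

   Duality: [e + S^(k)] lies in [S^(0)] exactly when [e] is in [S^(-k)]; the
   nontrivial direction tests [e] against points of [S^(k)] whose weight is
   concentrated on a single maximal chain.  Hence [R : span S^(k)] is
   [span S^(-k)], and every [span S^(k)] is divisorial.

   Decomposition: for [e = 1] or [e = -1], [S^(e n)] is [S^(e) + S^(e (n-1))].
   Given [xi] in [S^(e n)], let [h y] be the largest weight of a chain of [P]
   ending in [y], taken from the bottom of a maximal chain.  Then
   [eta y = floor (h y / n) - floor ((h y - xi y) / n)] lies in [S^(e)] and
   [xi - eta] in [S^(e (n - 1))], because [t |-> floor (t / n)] and
   [t |-> t - floor (t / n)] are monotone and their increments telescope along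
   every maximal chain. *)

Section Laurent.
Context {disp : Order.disp_t} {P : finPOrderType disp} {K : fieldType}.
Local Notation expo := (expo P).
Local Notation laurent := (laurent P K).
Implicit Types (s t u : laurent) (a b e x : expo).

Definition mono a (k : K) : laurent := [:: (a, k)].

Lemma coef_nil e : coef ([::] : laurent) e = 0.
Proof. by rewrite /coef big_nil. Qed.

Lemma coef_cons p s e :
  coef (p :: s) e = (if p.1 == e then p.2 else 0) + coef s e.
Proof. by rewrite /coef big_cons; case: ifP; rewrite ?add0r. Qed.

Lemma coef_cat s t e : coef (s ++ t) e = coef s e + coef t e.
Proof. by rewrite /coef big_cat. Qed.

Lemma coef_mono a k e : coef (mono a k) e = if a == e then k else 0.
Proof. by rewrite coef_cons coef_nil addr0. Qed.

Lemma coef_eq0 s e : e \notin unzip1 s -> coef s e = 0.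
Proof.
elim: s => [|p s IH] /=; first by rewrite coef_nil.
rewrite in_cons negb_or => /andP[ne nin]; rewrite coef_cons IH //.
by rewrite eq_sym (negbTE ne) add0r.
Qed.

Lemma coef_neq0_mem s e : coef s e != 0 -> e \in unzip1 s.
Proof. by apply: contraR => /coef_eq0 ->. Qed.

Lemma sum_coef (F : expo -> K) s (E : seq expo) :
  uniq E -> {subset unzip1 s <= E} ->
  \sum_(p <- s) F p.1 * p.2 = \sum_(x <- E) F x * coef s x.
Proof.
move=> uE; elim: s => [|p s IH] sub.
  by rewrite big_nil big1 // => x _; rewrite coef_nil mulr0.
rewrite big_cons IH; last by move=> x xs; apply: sub; rewrite /= in_cons xs orbT.
have pE : p.1 \in E by apply: sub; rewrite /= in_cons eqxx.
under [in RHS]eq_bigr => x _ do rewrite coef_cons mulrDr.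
rewrite big_split /=; congr (_ + _).
rewrite (bigD1_seq p.1) //= eqxx big1 ?addr0 // => x.
by rewrite eq_sym => /negbTE ->; rewrite mulr0.
Qed.

Lemma expo_addE a b : expo_add a b = a + b. Proof. by []. Qed.

Lemma eq_subr a b e : (a == e - b) = (b + a == e).
Proof. by rewrite eq_sym subr_eq eq_sym addrC. Qed.

Lemma coef_lpmul s t e :
  coef (lpmul s t) e = \sum_(p <- s) coef t (e - p.1) * p.2.
Proof.
rewrite {1}/coef /lpmul big_mkcond big_allpairs_dep /=; apply: eq_bigr => p _.
rewrite /coef mulr_suml [RHS]big_mkcond /=; apply: eq_bigr => q _.
by rewrite expo_addE eq_subr; case: ifP; rewrite ?mul0r // mulrC.
Qed.

Lemma coef_lpmul_conv s t e :
  coef (lpmul s t) e = \sum_(x <- undup (unzip1 s)) coef t (e - x) * coef s x.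
Proof.
rewrite coef_lpmul (@sum_coef (fun x => coef t (e - x)) _ (undup (unzip1 s))) //.
  exact: undup_uniq.
by move=> x; rewrite mem_undup.
Qed.

Lemma coef_lpmul_mono s a e : coef (lpmul s (mono a 1)) e = coef s (e - a).
Proof.
rewrite coef_lpmul [RHS]/coef [RHS]big_mkcond /=; apply: eq_bigr => p _.
rewrite coef_mono eq_subr addrC -eq_subr.
by case: ifP; rewrite ?mul1r ?mul0r.
Qed.

Lemma lpeq_refl s : lpeq s s. Proof. by []. Qed.
Lemma lpeq_sym s t : lpeq s t -> lpeq t s. Proof. by move=> h e; rewrite h. Qed.
Lemma lpeq_trans s t u : lpeq s t -> lpeq t u -> lpeq s u.
Proof. by move=> h1 h2 e; rewrite h1 h2. Qed.

Lemma lpmulC s t : lpeq (lpmul s t) (lpmul t s).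
Proof.
move=> e; rewrite /coef /lpmul [LHS]big_mkcond [RHS]big_mkcond.
rewrite !big_allpairs_dep exchange_big /=.
apply: eq_bigr => q _; apply: eq_bigr => p _ /=.
by rewrite !expo_addE addrC mulrC.
Qed.

Lemma lpmulA s t u : lpeq (lpmul s (lpmul t u)) (lpmul (lpmul s t) u).
Proof.
move=> e; rewrite /coef /lpmul [LHS]big_mkcond [RHS]big_mkcond.
rewrite big_allpairs_dep [RHS]big_allpairs_dep [RHS]big_allpairs_dep /=.
apply: eq_bigr => p _; rewrite big_allpairs_dep /=.
apply: eq_bigr => q _; apply: eq_bigr => r _ /=.
by rewrite !expo_addE addrA mulrA.
Qed.

Lemma lpeq_mulr s t t' : lpeq t t' -> lpeq (lpmul s t) (lpmul s t').
Proof. by move=> h e; rewrite !coef_lpmul; apply: eq_bigr => p _; rewrite h. Qed.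

Lemma lpeq_mul s s' t t' : lpeq s s' -> lpeq t t' ->
  lpeq (lpmul s t) (lpmul s' t').
Proof.
move=> hs ht; apply: lpeq_trans (lpeq_mulr _ ht) _.
apply: lpeq_trans (lpmulC _ _) _; apply: lpeq_trans (lpeq_mulr _ hs) _.
exact: lpmulC.
Qed.

Lemma lpeq_add s s' t t' : lpeq s s' -> lpeq t t' ->
  lpeq (lpadd s t) (lpadd s' t').
Proof. by move=> h1 h2 e; rewrite /lpadd !coef_cat h1 h2. Qed.

Lemma lpmulDl s t u : lpmul (lpadd s t) u = lpadd (lpmul s u) (lpmul t u).
Proof. by rewrite /lpmul /lpadd allpairs_cat. Qed.

(* Exponents are compared lexicographically through their lists of values:
   a total order compatible with translation, which provides leading terms. *)
Definition key (e : expo) : seqlexi int := [seq e i | i <- enum {: option P}].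

Lemma key_inj : injective key.
Proof. by move=> e f /eq_in_map h; apply/ffunP => i; apply: h; rewrite mem_enum. Qed.

Lemma lexi_mapD (l : seq (option P)) x y z :
  ([seq x i | i <- l] < [seq y i | i <- l] :> seqlexi int)%O ->
  ([seq x i + z i | i <- l] < [seq y i + z i | i <- l] :> seqlexi int)%O.
Proof.
elim: l => [|i l IH] //=; rewrite !ltxi_cons !lerD2r.
by case/andP => -> /=; case: (y i <= x i)%O => //= /IH.
Qed.

Lemma key_ltD x y z : (key x < key y)%O -> (key (x + z) < key (y + z))%O.
Proof.
have keyD v : key (v + z) = [seq v i + z i | i <- enum {: option P}].
  by apply: eq_map => i; rewrite ffunE.
by rewrite !keyD; apply: lexi_mapD.
Qed.

Lemma exists_key_max (l : seq expo) x0 : x0 \in l ->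
  exists2 m, m \in l & forall x, x \in l -> (key x <= key m)%O.
Proof.
elim: l x0 => [|a [|b l'] IH] x0 // _.
  by exists a; rewrite ?mem_head // => x; rewrite inE => /eqP ->.
have [m ml hm] := IH b (mem_head _ _).
case: (leP (key a) (key m)) => h.
  exists m => [|x]; first by rewrite in_cons ml orbT.
  by rewrite in_cons => /orP[/eqP ->|/hm].
exists a => [|x]; first exact: mem_head.
by rewrite in_cons => /orP[/eqP -> //|/hm/le_trans]; apply; apply: ltW.
Qed.

Lemma lead_expo s : ~ lpzero s ->
  exists2 m, coef s m != 0 & forall x, coef s x != 0 -> (key x <= key m)%O.
Proof.
move=> /not_all_ex_not[e0 /eqP e0s].
have e0l : e0 \in [seq x <- unzip1 s | coef s x != 0].
  by rewrite mem_filter e0s coef_neq0_mem.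
have [m] := exists_key_max e0l; rewrite mem_filter => /andP[ms _] hm.
by exists m => // x xs; apply: hm; rewrite mem_filter xs coef_neq0_mem.
Qed.

(* The product of the leading terms cannot cancel. *)
Lemma lpmul_neq0 s t : ~ lpzero s -> ~ lpzero t -> ~ lpzero (lpmul s t).
Proof.
move=> /lead_expo[m1 s1 hs] /lead_expo[m2 t2 ht] /(_ (m1 + m2)); apply/eqP.
rewrite coef_lpmul_conv (bigD1_seq m1) ?undup_uniq ?mem_undup ?coef_neq0_mem //=.
rewrite addrAC subrr add0r big1 ?addr0 ?mulf_neq0 // => x xm1.
case: (coef s x =P 0) => [-> | /eqP sx]; first by rewrite mulr0.
have lt_x : (key x < key m1)%O.
  by rewrite lt_neqAle hs // andbT; apply: contra xm1 => /eqP/key_inj ->.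
case: (coef t (m1 + m2 - x) =P 0) => [-> | /eqP tx]; first by rewrite mul0r.
have := key_ltD (m2 - x) lt_x; rewrite addrC subrK addrA.
by move=> /lt_le_trans/(_ (ht _ tx)); rewrite ltxx.
Qed.

Definition lpneg s : laurent := [seq (p.1, - p.2) | p <- s].

Lemma coef_lpneg s e : coef (lpneg s) e = - coef s e.
Proof. by rewrite /coef big_map sumrN. Qed.

Lemma lpmul_cancel s s' t : ~ lpzero t ->
  lpeq (lpmul s t) (lpmul s' t) -> lpeq s s'.
Proof.
move=> nt h; apply: NNPP => ne; apply: (@lpmul_neq0 (lpadd s (lpneg s')) t) => //.
  move=> z; apply: ne => e; apply/eqP; rewrite -subr_eq0.
  by move: (z e); rewrite /lpadd coef_cat coef_lpneg => ->.
move=> e; rewrite lpmulDl /lpadd coef_cat h !coef_lpmul big_map -big_split /=.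
by rewrite big1 // => p _; rewrite mulrN subrr.
Qed.

Lemma mono_neq0 a k : k != 0 -> ~ lpzero (mono a k).
Proof. by move=> nk /(_ a); rewrite coef_mono eqxx; apply/eqP. Qed.

Lemma lpone_neq0 : ~ lpzero (lpone P K).
Proof. by have -> : lpone P K = mono 0 1 by []; apply: mono_neq0; apply: oner_neq0. Qed.

Lemma mono_mul a b k l : lpmul (mono a k) (mono b l) = mono (a + b) (k * l).
Proof. by []. Qed.

Lemma supported_nil (A : pred expo) : supported_in A ([::] : laurent).
Proof. by move=> e; rewrite coef_nil eqxx. Qed.

Lemma supported_mono (A : pred expo) a k : A a -> supported_in A (mono a k).
Proof.
by move=> Aa e; rewrite coef_mono; case: (a =P e) => [<- | _] //; rewrite eqxx.
Qed.

Lemma supported_add (A : pred expo) s t :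
  supported_in A s -> supported_in A t -> supported_in A (lpadd s t).
Proof.
move=> hs ht e; rewrite /lpadd coef_cat.
by case: (coef s e =P 0) => [-> | /eqP/hs //]; rewrite add0r; apply: ht.
Qed.

Lemma supported_mul (A B X : pred expo) s t :
  supported_in A s -> supported_in B t ->
  (forall a b, A a -> B b -> X (a + b)) -> supported_in X (lpmul s t).
Proof.
move=> hs ht hX e; apply: contraR => nXe.
rewrite coef_lpmul_conv big1_seq // => x _.
case: (coef s x =P 0) => [-> | /eqP/hs Ax]; first by rewrite mulr0.
case: (coef t (e - x) =P 0) => [-> | /eqP/ht Bx]; first by rewrite mul0r.
by have := hX _ _ Ax Bx; rewrite addrC subrK (negbTE nXe).
Qed.

End Laurent.

Section Chains.
Context {disp : Order.disp_t} {P : finPOrderType disp}.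
Implicit Types (A C D : {set P}).

Lemma chainP C :
  reflect (forall x y, x \in C -> y \in C -> (x >=< y)%O) (is_chain C).
Proof.
apply: (iffP forall_inP) => [h x y xC | h x xC]; first exact/forall_inP/h.
by apply/forall_inP => y; apply: h.
Qed.

Lemma max_chainW C : is_max_chain C -> is_chain C.
Proof. by case/andP. Qed.

Lemma max_chain_eq C D : is_max_chain C -> is_chain D -> C \subset D -> D = C.
Proof.
by case/andP => _ /forallP h cD sCD; apply/eqP; move/implyP: (h D); apply; rewrite cD.
Qed.

Lemma max_chain_cmp C x y : is_max_chain C -> x \in C -> y \in C -> (x >=< y)%O.
Proof. by move/max_chainW/chainP; apply. Qed.

Lemma max_chain_mem C z : is_max_chain C ->
  (forall y, y \in C -> (z >=< y)%O) -> z \in C.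
Proof.
move=> hC hz; suff <- : z |: C = C by rewrite setU11.
apply: (max_chain_eq hC) (subsetUr _ _).
apply/chainP => x y; rewrite !in_setU1 => /orP[/eqP-> | xC] /orP[/eqP-> | yC].
- exact: comparablexx.
- exact: hz.
- by rewrite comparable_sym hz.
- exact: max_chain_cmp hC xC yC.
Qed.

Lemma max_chain_intro C : is_chain C ->
  (forall z, (forall y, y \in C -> (z >=< y)%O) -> z \in C) -> is_max_chain C.
Proof.
move=> cC hC; rewrite /is_max_chain cC; apply/forallP => D; apply/implyP.
case/andP => /chainP cD sCD; rewrite eqEsubset sCD andbT; apply/subsetP => z zD.
by apply: hC => y yC; apply: cD => //; apply: (subsetP sCD).
Qed.

Lemma card_below_lt A x y : x \in A -> (x < y)%O ->
  (#|[set z in A | (z < x)%O]| < #|[set z in A | (z < y)%O]|)%N.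
Proof.
move=> xA xy; apply: proper_card; rewrite properE; apply/andP; split.
  by apply/subsetP => z; rewrite !inE => /andP[-> /lt_trans]; apply.
by apply/subsetPn; exists x; rewrite !inE ?ltxx ?andbF ?xA ?xy.
Qed.

Lemma chain_max C A : is_chain C -> A \subset C -> A != set0 ->
  exists2 t, t \in A & forall y, y \in A -> (y <= t)%O.
Proof.
move=> /chainP cC sAC /set0Pn[y0 y0A].
have [t tA ht] := @arg_maxnP _ y0 (mem A) (fun t => #|[set z in A | (z < t)%O]|) y0A.
exists t => // y yA; rewrite comparable_leNgt ?cC ?(subsetP sAC) //.
by apply/negP => /(card_below_lt tA)/(leq_ltn_trans (ht y yA)); rewrite ltnn.
Qed.

Lemma max_chain_ltNge C x y : is_max_chain C -> x \in C -> y \in C ->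
  ~~ (y <= x)%O -> (x < y)%O.
Proof. by move=> hC xC yC; rewrite comparable_ltNge // (max_chain_cmp hC). Qed.

Lemma splice_max_chain C C' x x' : is_max_chain C -> is_max_chain C' ->
  x \in C -> x' \in C -> (x < x')%O ->
  (forall z, z \in C -> ~~ ((x < z) && (z < x'))%O) -> x \in C' ->
  is_max_chain ([set y in C' | (y <= x)%O] :|: [set y in C | (x' <= y)%O]).
Proof.
move=> hC hC' xC x'C xx' gap xC'; set C2 := _ :|: _.
have inC2 y : (y \in C2) = (y \in C') && (y <= x)%O || (y \in C) && (x' <= y)%O.
  by rewrite !inE.
have xC2 : x \in C2 by rewrite inC2 xC' lexx.
have x'C2 : x' \in C2 by rewrite inC2 x'C lexx orbT.
apply: max_chain_intro => [|z cz].
  apply/chainP => u v; rewrite !inC2.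
  move=> /orP[/andP[uC ux] | /andP[uC xu]] /orP[/andP[vC vx] | /andP[vC xv]].
  - exact: max_chain_cmp hC' uC vC.
  - exact/le_comparable/(le_trans ux)/(le_trans (ltW xx')).
  - exact/ge_comparable/(le_trans vx)/(le_trans (ltW xx')).
  - exact: max_chain_cmp hC uC vC.
case zx: (z <= x)%O.
  rewrite inC2 zx andbT (max_chain_mem hC') //= => y yC'.
  case yx: (y <= x)%O; first by apply: cz; rewrite inC2 yC' yx.
  by apply/le_comparable/(le_trans zx)/ltW/(max_chain_ltNge hC' xC' yC'); rewrite yx.
case x'z: (x' <= z)%O.
  rewrite inC2 x'z andbT (max_chain_mem hC) ?orbT // => y yC.
  case x'y: (x' <= y)%O; first by apply: cz; rewrite inC2 yC x'y orbT.
  by apply/ge_comparable/le_trans/x'z/ltW/(max_chain_ltNge hC yC x'C); rewrite x'y.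
have xz : (x < z)%O by rewrite comparable_ltNge ?zx // comparable_sym cz.
have zx' : (z < x')%O by rewrite comparable_ltNge ?x'z // cz.
suff zC : z \in C by move: (gap z zC); rewrite xz zx'.
apply: (max_chain_mem hC) => y yC.
case yx: (y <= x)%O; first exact/ge_comparable/(le_trans yx)/ltW.
case x'y: (x' <= y)%O; first exact/le_comparable/(le_trans (ltW zx')).
move: (gap y yC); rewrite (max_chain_ltNge hC xC yC) ?yx //.
by rewrite (max_chain_ltNge hC yC x'C) ?x'y.
Qed.

End Chains.

Section Exponents.
Context {disp : Order.disp_t} {P : finPOrderType disp}.
Local Notation expo := (expo P).
Implicit Types (a b xi : expo) (C D : {set P}).

Lemma SP k xi : reflect ((forall x, k <= xi (Some x)) /\
   (forall C, is_max_chain C -> \sum_(x in C) xi (Some x) + k <= xi None)) (S k xi).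
Proof.
apply: (iffP andP) => [[/forallP h1 /forallP h2]|[h1 h2]]; split => //.
- by move=> C; apply/implyP.
- exact/forallP.
- by apply/forallP => C; apply/implyP; apply: h2.
Qed.

Lemma S_add j k a b : S j a -> S k b -> S (j + k) (a + b).
Proof.
move=> /SP[a1 a2] /SP[b1 b2]; apply/SP; split => [x | C hC].
  by rewrite ffunE lerD.
rewrite ffunE; under eq_bigr => x _ do rewrite ffunE.
by rewrite big_split /= addrACA lerD ?a2 ?b2.
Qed.

Lemma S_le j k a : j <= k -> S k a -> S j a.
Proof.
move=> jk /SP[a1 a2]; apply/SP; split => [x | C hC].
  exact: le_trans jk (a1 x).
by apply: le_trans (a2 C hC); rewrite lerD2l.
Qed.

Lemma S_norm a : S (- (`|a None| + \sum_x `|a (Some x)|)) a.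
Proof.
have le_sum (A : {set P}) : \sum_(x in A) a (Some x) <= \sum_x `|a (Some x)|.
  rewrite [leRHS](bigID (mem A)) /= -[leLHS]addr0 lerD ?sumr_ge0 //.
  by apply: ler_sum => x _; apply: ler_norm.
apply/SP; split => [x | C _].
  have : `|a (Some x)| <= \sum_y `|a (Some y)|.
    by rewrite (bigD1 x) //= lerDl sumr_ge0.
  by have := ler_norm (- a (Some x)); have := normr_ge0 (a None); rewrite normrN; lia.
by have := le_sum C; have := ler_norm (- a None); rewrite normrN; lia.
Qed.

Definition base (k : int) : expo :=
  [ffun z => if z is Some _ then k else `|k| * (#|P|.+1)%:Z].

Lemma S_base k : S k (base k).
Proof.
apply/SP; split => [x | C hC]; first by rewrite ffunE.
rewrite ffunE; under eq_bigr => x _ do rewrite ffunE.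
by rewrite sumr_const; move: (max_card C); move: #|C| #|P| => c p; nia.
Qed.

Lemma S0_shift a : exists U, S 0 U /\ S 0 (a + U).
Proof.
set N := `|a None| + \sum_x `|a (Some x)|.
have N0 : 0 <= N by rewrite addr_ge0 ?sumr_ge0.
exists (base N); split; first exact: S_le N0 (S_base N).
by rewrite -(addNr N); apply: S_add (S_norm a) (S_base N).
Qed.

Lemma bump_ineq (k : int) (c d i p : nat) : (c <= p)%N -> (d <= p)%N -> (i < c)%N ->
  k *+ d + `|k| *+ p *+ i <= k *+ c + `|k| *+ p *+ c.
Proof.
move=> cp dp ic.
have kd : k *+ d <= k *+ c + `|k| *+ p.
  have [k0 | k0] := lerP 0 k.
    rewrite ger0_norm // -mulrnDr; apply: ler_wpMn2l => //.
    exact: leq_trans dp (leq_addl _ _).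
  rewrite ltr0_norm // mulNrn; apply: le_trans (mulrn_wle0 _ (ltW k0)) _.
  by rewrite subr_ge0; exact: (@ler_wnMn2l _ k (ltW k0) p c cp).
have Kc : `|k| *+ p *+ i + `|k| *+ p <= `|k| *+ p *+ c.
  by rewrite -mulrSr; apply: ler_wpMn2l; rewrite ?mulrn_wge0.
by apply: le_trans (lerD kd (lexx _)) _; rewrite -addrA lerD2l addrC.
Qed.

(* A point of [S^(k)] whose weight concentrates on the chain [C]: each element
   of [C] carries the extra weight [|k| * #|P|], which makes [C] the heaviest
   maximal chain. *)
Definition bump (k : int) C : expo := [ffun z => match z with
  | Some y => k + (if y \in C then `|k| *+ #|P| else 0)
  | None => (k + `|k| *+ #|P|) *+ #|C| + k end].

Lemma S_bump k C : is_max_chain C -> S k (bump k C).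
Proof.
move=> hC; apply/SP; split => [x | D hD].
  by rewrite ffunE lerDl; case: ifP; rewrite ?mulrn_wge0.
rewrite !ffunE lerD2r; under eq_bigr => x _ do rewrite ffunE.
rewrite big_split /= sumr_const -big_mkcondr /= mulrnDl.
rewrite (eq_bigl (mem (D :&: C))); last by move=> x; rewrite /= !inE.
rewrite sumr_const; have [-> | nDC] := eqVneq D C; first by rewrite setIid.
have ltDC : (#|D :&: C| < #|C|)%N.
  rewrite proper_card // properEneq subsetIr andbT; apply: contra nDC => /eqP eDC.
  by apply/eqP/(max_chain_eq hC (max_chainW hD)); rewrite -eDC subsetIl.
exact: bump_ineq (max_card C) (max_card D) ltDC.
Qed.

Lemma S_dual k e : (forall a, S k a -> S 0 (e + a)) -> S (- k) e.
Proof.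
move=> h; apply/SP; split => [x | C hC].
  by move/SP: (h _ (S_base k)) => [/(_ x) + _]; rewrite !ffunE /=; lia.
move/SP: (h _ (S_bump k hC)) => [_ /(_ C hC)]; rewrite addr0 !ffunE /=.
under eq_bigr => x _ do rewrite !ffunE /=.
rewrite (eq_bigr (fun x => e (Some x) + (k + `|k| *+ #|P|))); last by move=> x ->.
rewrite big_split sumr_const /=.
by move: (_ *+ #|C|) (\sum_(i in C) _) => A X; lia.
Qed.

End Exponents.

Section FractionalIdeals.
Context {disp : Order.disp_t} {P : finPOrderType disp} {K : fieldType}.
Local Notation expo := (expo P).
Local Notation laurent := (laurent P K).
Local Notation frac := (Defs.frac P K).
Local Notation fracideal := (fracideal P K).
Local Notation span A := (@monspan _ P K A).
Implicit Types (s t u v : laurent) (a b : expo) (A B W X : pred expo).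

Add Parametric Relation : laurent (@lpeq disp P K)
  reflexivity proved by (@lpeq_refl disp P K)
  symmetry proved by (@lpeq_sym disp P K)
  transitivity proved by (@lpeq_trans disp P K) as lpeq_rel.
Add Parametric Morphism : (@lpmul disp P K) with signature
  (@lpeq disp P K) ==> (@lpeq disp P K) ==> (@lpeq disp P K) as lpmul_mor.
Proof. by move=> s s' hs t t' ht; apply: lpeq_mul. Qed.
Add Parametric Morphism : (@lpadd disp P K) with signature
  (@lpeq disp P K) ==> (@lpeq disp P K) ==> (@lpeq disp P K) as lpadd_mor.
Proof. by move=> s s' hs t t' ht; apply: lpeq_add. Qed.

Local Infix "**" := lpmul (at level 40, left associativity).

Lemma lpmulCA s t u : lpeq (s ** (t ** u)) (t ** (s ** u)).
Proof. by rewrite lpmulA (lpmulC s t) -lpmulA. Qed.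

Lemma lpmulAC s t u : lpeq (s ** t ** u) (s ** u ** t).
Proof. by rewrite -lpmulA (lpmulC t u) lpmulA. Qed.

Lemma lpmulACA s t u v : lpeq (s ** t ** (u ** v)) (s ** u ** (t ** v)).
Proof. by rewrite -!lpmulA (lpmulCA t u v). Qed.

(* [T^a] need not lie in [R]; it is the quotient [T^(a+U) / T^U] of two
   monomials of [R]. *)
Lemma monspan_mono W a U k : W a -> S 0 U -> S 0 (a + U) ->
  span W (mono (a + U) k, mono U 1).
Proof.
move=> Wa SU SaU; split.
  split; first exact: supported_mono.
  by split; [exact: supported_mono | apply: mono_neq0; apply: oner_neq0].
by exists (mono a k); split; [apply: supported_mono | rewrite mono_mul mulr1].
Qed.

Lemma monspan_sub_colon W B : (forall b a, B b -> W a -> S 0 (b + a)) ->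
  forall q, span B q -> colon (span W) q.
Proof.
move=> hBW q [vq [c [Bc hc]]]; split => // i [_ [d [Wd hd]]].
exists (c ** d); split; first exact: supported_mul Bc Wd hBW.
by rewrite /fmul /= hc hd lpmulACA.
Qed.

Lemma colon_sub_monspan W B : (exists a0, W a0) ->
  (forall e, (forall a, W a -> S 0 (e + a)) -> B e) ->
  forall q, colon (span W) q -> span B q.
Proof.
move=> [a0 Wa0] hB q [vq hq]; split => //.
have q2_neq0 : ~ lpzero q.2 by case: vq => _ [].
have [U0 [SU0 SaU0]] := S0_shift a0.
have [r0 [_ hr0]] := hq _ (monspan_mono 1 Wa0 SU0 SaU0); rewrite /fmul /= in hr0.
pose c := r0 ** mono (- a0) 1.
have hc : lpeq q.1 (c ** q.2).
  apply: (lpmul_cancel (t := mono (a0 + U0) 1)); first exact/mono_neq0/oner_neq0.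
  rewrite hr0 /c -!lpmulA (lpmulCA (mono (- a0) 1)) mono_mul.
  by rewrite addKr mulr1.
exists c; split => // e ce; apply: hB => a Wa.
have [U [SU SaU]] := S0_shift a.
have [r [Sr hr]] := hq _ (monspan_mono 1 Wa SU SaU); rewrite /fmul /= in hr.
have hca : lpeq (c ** mono a 1) r.
  apply: (lpmul_cancel (t := q.2 ** mono U 1)).
    exact/lpmul_neq0/mono_neq0/oner_neq0.
  by rewrite -hr hc lpmulACA mono_mul mulr1.
by apply: Sr; rewrite -hca coef_lpmul_mono addrK.
Qed.

Definition fsum (l : seq (frac * frac)) : frac :=
  foldr (@fadd _ P K) (fzero P K) [seq fmul p.1 p.2 | p <- l].

Lemma fsum_cons p l : fsum (p :: l) = fadd (fmul p.1 p.2) (fsum l).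
Proof. by []. Qed.

Lemma fsum_monspan A B X (l : seq (frac * frac)) :
  (forall a b, A a -> B b -> X (a + b)) ->
  (forall p, p \in l -> span A p.1 /\ span B p.2) ->
  exists c, [/\ supported_in X c, lpeq (fsum l).1 (c ** (fsum l).2)
                & ~ lpzero (fsum l).2].
Proof.
move=> hX; elim: l => [|p l IH] hl.
  by exists [::]; split; [apply: supported_nil | | apply: lpone_neq0].
have [|c [Xc hc l_neq0]] := IH; first by move=> p' p'l; apply: hl; rewrite inE p'l orbT.
have [[[_ [_ p12]] [c1 [A1 h1]]] [[_ [_ p22]] [c2 [B2 h2]]]] := hl p (mem_head _ _).
rewrite fsum_cons; exists (lpadd (c1 ** c2) c); split.
- exact: supported_add (supported_mul A1 B2 hX) Xc.
- rewrite /fadd /fmul /= lpmulDl; apply: lpeq_add.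
    by rewrite h1 h2 lpmulACA -lpmulA.
  by rewrite hc -lpmulA (lpmulC (fsum l).2).
- exact/lpmul_neq0/l_neq0/lpmul_neq0.
Qed.

Lemma prodI_sub_monspan A B X : (forall a b, A a -> B b -> X (a + b)) ->
  forall q, prodI (span A) (span B) q -> span X q.
Proof.
move=> hX q [vq [l [hl hq]]]; split => //.
have [c [Xc hc l_neq0]] := fsum_monspan hX hl.
exists c; split => //; apply: (lpmul_cancel (t := (fsum l).2)) => //.
by move: hq; rewrite /fequiv -/(fsum l) => ->; rewrite hc lpmulAC.
Qed.

Lemma exists_fsum_monspan A B X :
  (forall x, X x -> exists a b, [/\ A a, B b & x = a + b]) ->
  forall c, all (fun p => X p.1) c ->
  exists l : seq (frac * frac), (forall p, p \in l -> span A p.1 /\ span B p.2) /\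
    lpeq (fsum l).1 (c ** (fsum l).2).
Proof.
move=> hX; elim => [|[x k] c IH] /=; first by exists [::].
case/andP => /hX[a [b [Aa Bb ->]]] /IH[l [hl hc]].
have [Ua [SUa SaUa]] := S0_shift a; have [Ub [SUb SbUb]] := S0_shift b.
exists (((mono (a + Ua) k, mono Ua 1), (mono (b + Ub) 1, mono Ub 1)) :: l); split.
  by move=> p; rewrite inE => /orP[/eqP -> | /hl //]; split; apply: monspan_mono.
rewrite fsum_cons /fadd /fmul /= !mono_mul !mulr1.
rewrite -[_ :: c]/(lpadd (mono (a + b) k) c) lpmulDl; apply: lpeq_add.
  by rewrite lpmulA mono_mul mulr1 addrACA.
by rewrite hc -lpmulA (lpmulC (fsum l).2).
Qed.

Lemma monspan_sub_prodI A B X :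
  (forall x, X x -> exists a b, [/\ A a, B b & x = a + b]) ->
  forall q, span X q -> prodI (span A) (span B) q.
Proof.
move=> hX q [vq [c [Xc hc]]]; split => //.
pose c' := [seq p <- c | X p.1].
have cc' : lpeq c c'.
  move=> e; rewrite /c' /coef big_filter_cond.
  case Xe: (X e); first by apply: eq_bigl => p; case: eqP => [-> | ]; rewrite ?Xe ?andbF.
  rewrite big_pred0 => [|p]; last by case: eqP => [-> | ]; rewrite ?Xe ?andbF.
  by apply/eqP; apply: contraFT Xe => /Xc.
have [l [hl hlc]] := exists_fsum_monspan hX (filter_all (fun p => X p.1) c).
exists l; split => //; rewrite /fequiv -/(fsum l).
by rewrite hlc hc -/c' -cc' lpmulAC.
Qed.

Lemma fieq_sym (I J : fracideal) : fieq I J -> fieq J I.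
Proof. by move=> h q; split => /h. Qed.
Lemma fieq_trans (I J L : fracideal) : fieq I J -> fieq J L -> fieq I L.
Proof. by move=> h1 h2 q; split => [/h1/h2 | /h2/h1]. Qed.

Lemma colon_fieq (I J : fracideal) : fieq I J -> fieq (colon I) (colon J).
Proof. by move=> h q; split => -[vq hq]; split => // i /h; apply: hq. Qed.

Lemma prodI_fieq (I I' J J' : fracideal) :
  fieq I I' -> fieq J J' -> fieq (prodI I J) (prodI I' J').
Proof.
move=> hI hJ q; split => -[vq [l [hl hq]]]; split => //; exists l;
  by split => // p /hl[/hI ? /hJ ?].
Qed.

End FractionalIdeals.

Section Heights.
Context {disp : Order.disp_t} {P : finPOrderType disp} (xi : expo P).
Local Notation w y := (xi (Some y)).
Implicit Types (C D : {set P}) (x y z t : P).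

Definition below_sum C x := \sum_(y in C | (y < x)%O) w y.

(* [wmin] is a lower bound of every partial sum of weights, so it is a
   harmless initial value for the maximum defining [height]. *)
Definition wmin := - \sum_y `|w y|.

Definition height x :=
  \big[Num.max/wmin]_(C | is_max_chain C && (x \in C)) (below_sum C x + w x).

Lemma wmin_le (Q : pred P) : wmin <= \sum_(y | Q y) w y.
Proof.
rewrite /wmin (bigID Q) /= opprD.
apply: (@le_trans _ _ (- \sum_(y | Q y) `|w y|)).
  by rewrite gerDl oppr_le0 sumr_ge0.
rewrite -sumrN; apply: ler_sum => y _.
by have := ler_norm (- w y); rewrite normrN lerNl.
Qed.

Lemma height_ge C x : is_max_chain C -> x \in C -> below_sum C x + w x <= height x.
Proof. by move=> hC xC; rewrite /height (bigD1 C) ?hC ?xC //= le_max lexx. Qed.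

Lemma height_le x b : wmin <= b ->
  (forall C, is_max_chain C -> x \in C -> below_sum C x + w x <= b) -> height x <= b.
Proof.
move=> h0 h; apply: (big_ind (fun v => v <= b)) => // [u v hu hv | C /andP[]].
  by rewrite ge_max hu hv.
exact: h.
Qed.

Lemma below_sum_splice C C' x x' : (x < x')%O -> x \in C' ->
  below_sum ([set y in C' | (y <= x)%O] :|: [set y in C | (x' <= y)%O]) x' =
  below_sum C' x + w x.
Proof.
move=> xx' xC'; rewrite /below_sum (eq_bigl (fun y => (y \in C') && (y <= x)%O)).
  rewrite (bigD1 x) /= ?xC' ?lexx // addrC; congr (_ + _); apply: eq_bigl => y.
  by rewrite lt_neqAle -andbA [(_ <= _)%O && _]andbC.
move=> y; rewrite !inE; apply/idP/idP => [|/andP[-> yx]].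
  case/andP => /orP[/andP[-> -> //] | /andP[_ x'y] /(le_lt_trans x'y)].
  by rewrite ltxx.
by rewrite yx (le_lt_trans yx xx').
Qed.

Lemma height_step C t' t : is_max_chain C -> t' \in C -> t \in C -> (t' < t)%O ->
  (forall z, z \in C -> ~~ ((t' < z) && (z < t))%O) -> height t' + w t <= height t.
Proof.
move=> hC t'C tC t't gap; rewrite -lerBrDr; apply: height_le => [|C' hC' t'C'].
  rewrite lerBrDr; apply: le_trans (height_ge hC tC); rewrite lerD2r.
  exact: wmin_le.
have hC2 := splice_max_chain hC hC' t'C tC t't gap t'C'.
rewrite lerBrDr -(below_sum_splice C t't t'C'); apply: height_ge hC2 _.
by rewrite !inE tC lexx orbT.
Qed.

Lemma height_top k C t : S k xi -> is_max_chain C -> t \in C ->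
  (forall y, y \in C -> (y <= t)%O) -> height t <= xi None - k.
Proof.
move=> /SP[_ hS] hC tC max_t.
have t_top z : ~~ (t < z)%O.
  apply/negP => tz; have /max_t : z \in C.
    by apply: (max_chain_mem hC) => y /max_t yt; apply/ge_comparable/(le_trans yt)/ltW.
  by move=> /(lt_le_trans tz); rewrite ltxx.
apply: height_le => [|C' hC' tC']; rewrite lerBrDr.
  by apply: le_trans (hS C hC); rewrite lerD2r wmin_le.
have -> : below_sum C' t = \sum_(y in C' | y != t) w y.
  apply: eq_bigl => y; case yC: (y \in C') => //=.
  by rewrite lt_neqAle (comparable_leNgt (max_chain_cmp hC' yC tC')) t_top andbT.
by apply: le_trans (hS C' hC'); rewrite lerD2r [leRHS](bigD1 t) //= addrC.
Qed.

Section Telescope.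
Variable f : int -> int.
Hypothesis f_homo : {homo f : a b / a <= b}.
Local Notation jump y := (f (height y) - f (height y - w y)).

Lemma height_telescope C t : is_max_chain C -> t \in C ->
  \sum_(y in C | (y <= t)%O) jump y <= f (height t) - f 0.
Proof.
move=> hC; have [n] := ubnP #|[set y in C | (y < t)%O]|.
elim: n t => // n IH t lt_n tC; rewrite (bigD1 t) ?tC ?lexx //=.
set A := [set y in C | (y < t)%O] in lt_n *.
rewrite (eq_bigl (mem A)); last first.
  by move=> y; rewrite !inE lt_neqAle -andbA [(y <= t)%O && _]andbC.
have sAC : A \subset C by apply/subsetP => y; rewrite inE => /andP[].
have [A0 | /(chain_max (max_chainW hC) sAC)[t' t'A max_t']] := eqVneq A set0.
  rewrite A0 big_set0 addr0 lerD2l lerN2; apply: f_homo.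
  have := height_ge hC tC; rewrite /below_sum big_pred0 ?add0r ?subr_ge0 // => y.
  apply/negbTE/negP => yCt; have : y \in A by rewrite inE.
  by rewrite A0 inE.
move: t'A; rewrite inE => /andP[t'C t't].
rewrite (eq_bigl (fun y => (y \in C) && (y <= t')%O)); last first.
  move=> y; apply/idP/idP => [yA | /andP[yC yt']].
    by rewrite max_t' // andbT; move: yA; rewrite !inE => /andP[].
  by rewrite !inE yC (le_lt_trans yt').
have gap z : z \in C -> ~~ ((t' < z) && (z < t))%O.
  move=> zC; apply/negP => /andP[t'z zt].
  by move: (max_t' z); rewrite !inE zC zt => /(_ isT) /(lt_le_trans t'z); rewrite ltxx.
have lt_t'n : (#|[set y in C | (y < t')%O]| < n)%N.
  by have := card_below_lt t'C t't; rewrite -/A; lia.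
have := IH t' lt_t'n t'C.
have step : height t' <= height t - w t by rewrite lerBrDr; apply: height_step gap.
have := f_homo step.
by move: (\sum_(i in C | _) _) => Sum; lia.
Qed.

Lemma chain_jump_le k C : S k xi -> is_max_chain C ->
  \sum_(y in C) jump y <= f (xi None - k) - f 0.
Proof.
move=> Sk hC; have [C0 | ] := eqVneq C set0.
  rewrite C0 big_set0 subr_ge0; apply: f_homo.
  by case/SP: Sk => _ /(_ C hC); rewrite C0 big_set0 add0r subr_ge0.
case/(chain_max (max_chainW hC) (subxx C)) => t tC max_t.
rewrite (eq_bigl (fun y => (y \in C) && (y <= t)%O)); last first.
  by move=> y; apply/idP/andP => [yC | []//]; split; last exact: max_t.
apply: le_trans (height_telescope hC tC) _; rewrite lerD2r.
exact/f_homo/(height_top Sk hC tC max_t).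
Qed.

End Telescope.

End Heights.

Section Decomposition.
Context {disp : Order.disp_t} {P : finPOrderType disp}.

Lemma divz_bounds (N t : int) : 0 < N ->
  (t %/ N)%Z * N <= t /\ t < ((t %/ N)%Z + 1) * N.
Proof. by move=> N0; rewrite -lez_divRL // -ltz_divLR // ltrDl. Qed.

Lemma divz_step (N s d e : int) : 0 < N -> e = 1 \/ e = -1 -> e * N <= d ->
  e <= ((s + d) %/ N)%Z - (s %/ N)%Z /\
  e * N - e <= d - (((s + d) %/ N)%Z - (s %/ N)%Z).
Proof.
move=> N0 he ed; have [l1 u1] := divz_bounds (s + d) N0.
have [l0 u0] := divz_bounds s N0.
by case: he => ?; subst e; split; nia.
Qed.

Lemma subr_divz_homo (N : int) : 0 < N -> {homo (fun t => t - (t %/ N)%Z) : a b / a <= b}.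
Proof.
move=> N0 a b ab; have [la ua] := divz_bounds a N0; have [lb ub] := divz_bounds b N0.
nia.
Qed.

Lemma S_decomp (n : nat) (e : int) (xi : expo P) : (0 < n)%N -> e = 1 \/ e = -1 ->
  S (e * n%:Z) xi -> exists eta, S e eta /\ S (e * n%:Z - e) (xi - eta).
Proof.
move=> n0 he Sxi; set N := n%:Z in Sxi *; have N0 : 0 < N by rewrite ltz_nat.
pose q t := (t %/ N)%Z.
pose eta : expo P := [ffun z => if z is Some y
  then q (height xi y) - q (height xi y - xi (Some y))
  else q (xi None - e * N) + e].
have eta_step y : e <= eta (Some y) /\ e * N - e <= (xi - eta) (Some y).
  rewrite !ffunE /=; have /SP[/(_ y) ley _] := Sxi.
  by have := divz_step (height xi y - xi (Some y)) N0 he ley; rewrite subrK.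
exists eta; split; apply/SP; split.
- by move=> y; case: (eta_step y).
- move=> C hC; rewrite ffunE lerD2r; under eq_bigr => y _ do rewrite ffunE.
  have q_homo : {homo q : a b / a <= b} by apply: lez_pdiv2r; apply: ltW.
  by move: (chain_jump_le q_homo Sxi hC); rewrite /q div0z subr0.
- by move=> y; case: (eta_step y).
- move=> C hC; rewrite !ffunE /=; under eq_bigr => y _ do rewrite !ffunE /=.
  have := chain_jump_le (subr_divz_homo N0) Sxi hC.
  rewrite (eq_bigr (fun y =>
    xi (Some y) - (q (height xi y) - q (height xi y - xi (Some y))))).
    have shift (a b c d g : int) : a <= b - c - d -> a + (c - g) <= b - (d + g).
      by lia.
    by rewrite div0z subr0; apply: shift.
  have regroup (h v a b : int) : h - a - (h - v - b) = v - (a - b) by lia.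
  by move=> y _; apply: regroup.
Qed.

End Decomposition.

Section Powers.
Context {disp : Order.disp_t} {P : finPOrderType disp} {K : fieldType}.
Local Notation span A := (@monspan _ P K A).
Implicit Types (I : fracideal P K) (e k : int) (m : nat).

Lemma colon_span_S k : fieq (colon (span (S k))) (span (S (- k))).
Proof.
move=> q; split.
  by apply: colon_sub_monspan => //; [exists (base k); apply: S_base | apply: S_dual].
by apply: monspan_sub_colon => b a Sb Sa; rewrite -(addNr k); apply: S_add.
Qed.

Lemma prodI_span_S e m : e = 1 \/ e = -1 ->
  fieq (prodI (span (S e)) (span (S (e * m%:Z)))) (span (S (e * m.+1%:Z))).
Proof.
move=> he q; have eSm : e * m.+1%:Z = e + e * m%:Z by rewrite intS mulrDr mulr1.
split; first by apply: prodI_sub_monspan => a b Sa Sb; rewrite eSm; apply: S_add.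
apply: monspan_sub_prodI => x Sx.
have [eta [Seta Srest]] := S_decomp (ltn0Sn m) he Sx.
exists eta, (x - eta); split => //; last by rewrite addrC subrK.
by move: Srest; rewrite eSm addrAC subrr add0r.
Qed.

Lemma opow_span_S I e m : e = 1 \/ e = -1 -> fieq I (span (S e)) ->
  fieq (opow I m) (span (S (e * m%:Z))).
Proof.
move=> he hI; elim: m => [|m IH]; first by rewrite mulr0.
exact: fieq_trans (prodI_fieq hI IH) (prodI_span_S m he).
Qed.

Lemma gpow_span_S I e m : e = 1 \/ e = -1 -> fieq I (span (S e)) ->
  fieq (gpow I m) (span (S (e * m%:Z))).
Proof.
move=> he hI; elim: m => [|m IH]; first by rewrite mulr0.
apply: fieq_trans
  (colon_fieq (colon_fieq (fieq_trans (prodI_fieq hI IH) (prodI_span_S m he)))) _.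
apply: fieq_trans (colon_fieq (colon_span_S _)) _.
by rewrite -{2}(opprK (e * m.+1%:Z)); apply: colon_span_S.
Qed.

End Powers.

Theorem mainTheorem1 (disp : Order.disp_t) (P : finPOrderType disp)
  (K : fieldType) (n : nat) (hn : (0 < n)%N) :
  fieq (gpow (@omega disp P K) n) (opow (@omega disp P K) n) /\
  fieq (opow (@omega disp P K) n) (@monspan disp P K (@S disp P n%:Z)) /\
  fieq (gpow (colon (@omega disp P K)) n) (opow (colon (@omega disp P K)) n) /\
  fieq (opow (colon (@omega disp P K)) n) (@monspan disp P K (@S disp P (- n%:Z))).
Proof.
have omegaE : fieq (@omega disp P K) (monspan (S 1)) by [].
have colon_omegaE : fieq (colon (@omega disp P K)) (monspan (S (-1))).
  exact: colon_span_S.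
have pos : (1 : int) = 1 \/ (1 : int) = -1 by left.
have neg : (-1 : int) = 1 \/ (-1 : int) = -1 by right.
have opow_pos := opow_span_S n pos omegaE; have gpow_pos := gpow_span_S n pos omegaE.
have opow_neg := opow_span_S n neg colon_omegaE.
have gpow_neg := gpow_span_S n neg colon_omegaE.
rewrite mul1r in opow_pos gpow_pos; rewrite mulN1r in opow_neg gpow_neg.
split; first exact: fieq_trans gpow_pos (fieq_sym opow_pos).
split; first exact: opow_pos.
by split; first exact: fieq_trans gpow_neg (fieq_sym opow_neg).
Qed.
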